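(* Let $C$ be the middle-thirds Cantor set and for $n\in\mathbb{N}$ let $S_n:=\{p/q\in C:\gcd(p,q)=1,\ 3^{n-1}\le q<3^n\}$ and, for $K<\infty$, $S_n^{(K)}:=\{p/q\in S_n: P(p/q)\le K\log q\}$. Suppose there exists $K<\infty$ such that for every $\varepsilon_1>0$, $\#(S_n\setminus S_n^{(K)})=O(2^{n(1+\varepsilon_1)})$. Then for every $\varepsilon_1>0$, $\#(S_n)=O(2^{n(1+\varepsilon_1)})$.
   Context: $C=\{x\in[0,1]: x=\sum_{i\ge1}a_i3^{-i}\text{ with all }a_i\in\{0,2\}\}$. For a rational number $p/q$, its period $P(p/q)$ is the (minimal) period of the eventually periodic part of its ternary expansion. $\log$ is the natural logarithm. *)

From Stdlib Require Import Reals Arith List.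
Open Scope R_scope.

(* Middle-thirds Cantor set: x = sum_{i>=1} a_i 3^{-i}, a_i in {0,2}.
   Here a k stands for the digit a_{k+1}. *)
Definition cantor (x : R) : Prop :=
  0 <= x <= 1 /\
  exists a : nat -> nat,
    (forall k, a k = 0%nat \/ a k = 2%nat) /\
    infinite_sum (fun k => INR (a k) / 3 ^ (S k)) x.

(* i-th ternary digit (i >= 1) of p/q (standard greedy expansion):
   floor(3^i p / q) mod 3. *)
Definition tdigit (p q i : nat) : nat := ((p * 3 ^ i) / q) mod 3.

Definition is_eventual_period (p q P : nat) : Prop :=
  (1 <= P)%nat /\
  exists N : nat, forall i : nat, (N <= i)%nat ->
    tdigit p q (i + P) = tdigit p q i.

Definition min_period (p q P : nat) : Prop :=
  is_eventual_period p q P /\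
  forall P', is_eventual_period p q P' -> (P <= P')%nat.

(* Rationals p/q (reduced, p,q naturals) are encoded by the pair (p,q). *)
Definition S_n (n : nat) (r : nat * nat) : Prop :=
  let (p, q) := r in
  cantor (INR p / INR q) /\ Nat.gcd p q = 1%nat /\
  (3 ^ (n - 1) <= q)%nat /\ (q < 3 ^ n)%nat.

Definition S_nK (K : R) (n : nat) (r : nat * nat) : Prop :=
  S_n n r /\
  let (p, q) := r in
  exists P, min_period p q P /\ INR P <= K * ln (INR q).

Definition card_le (A : nat * nat -> Prop) (M : R) : Prop :=
  forall l : list (nat * nat), NoDup l -> (forall x, In x l -> A x) ->
    INR (length l) <= M.

Definition count_bigO (A : nat -> nat * nat -> Prop) (eps : R) : Prop :=
  exists (c : R) (N : nat), forall n : nat, (N <= n)%nat ->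
    card_le (A n) (c * Rpower 2 (INR n * (1 + eps))).

(* The corollary rests on an UNCONDITIONAL bound,
   [count_bigO_SnK]: #S_n^(K) = O(2^(n(1+eps))) for every K and eps > 0; since
   S_n is covered by S_n \ S_n^(K) and S_n^(K), the hypothesis on the first
   part then gives the claim for S_n ([count_bigO_cover]). *)

From Stdlib Require Import Reals Arith List Lia Lra ZArith ClassicalEpsilon.
From mathcomp Require all_boot.

Module DivisorBound.
Import all_boot.
Local Open Scope nat_scope.

Lemma natpowE m n : Nat.pow m n = m ^ n.
Proof. by elim: n => [|n IH] //=; rewrite expnS IH. Qed.

Lemma In_mem (x : nat) s : In x s <-> x \in s.
Proof.
elim: s => [|y s IH] //=; rewrite in_cons; split.
- by case=> [->|/IH ->]; rewrite ?eqxx ?orbT.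
- by case/orP=> [/eqP ->|/IH]; [left|right].
Qed.

Lemma size_divisors n : size (divisors n) = \prod_(f <- prime_decomp n) f.2.+1.
Proof.
rewrite /divisors; elim: (prime_decomp n) => [|[p e] s IH] /=; first by rewrite big_nil.
rewrite big_cons -IH /prime.PrimeDecompAux.add_divisors.
elim: e => [|e IHe]; first by rewrite /= mul1n.
by rewrite iterS size_merge size_cat size_map IHe [in RHS]mulSn addnC.
Qed.

(* Local factor bound for a small prime p < 2^k: (e+1)^k <= k^k 2^e. *)
Lemma succ_exp_le_small k e : 0 < k -> e.+1 ^ k <= k ^ k * 2 ^ e.
Proof.
move=> k_gt0; set t := e %/ k.
have le_e_tk : e.+1 <= t.+1 * k by apply: ltn_ceil.
have le_t_2t : t.+1 <= 2 ^ t by apply: ltn_expl.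
have le_tk_e : t * k <= e by apply: leq_divM.
apply: (@leq_trans ((t.+1 * k) ^ k)); first by rewrite leq_exp2r.
rewrite expnMn mulnC leq_mul //.
apply: (@leq_trans ((2 ^ t) ^ k)); first by rewrite leq_exp2r.
by rewrite -expnM leq_pexp2l.
Qed.

Lemma succ_exp_le_large k e p : 0 < k -> 2 ^ k <= p -> e.+1 ^ k <= p ^ e.
Proof.
move=> k_gt0 le_2k_p.
apply: (@leq_trans ((2 ^ e) ^ k)); first by rewrite leq_exp2r // ltn_expl.
rewrite expnAC; case: e => [|e]; first by rewrite !expn0.
by rewrite leq_exp2r.
Qed.

Lemma succ_exp_le_prime_power k e p : 0 < k -> 2 <= p ->
  e.+1 ^ k <= (if p < 2 ^ k then k ^ k else 1) * p ^ e.
Proof.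
move=> k_gt0 p_ge2; case: ifP => small_p.
- apply: leq_trans (@succ_exp_le_small k e k_gt0) _; rewrite leq_mul //.
  case: e => [|e]; first by rewrite !expn0.
  by rewrite leq_exp2r.
- by rewrite mul1n; apply: succ_exp_le_large; rewrite // leqNgt small_p.
Qed.

Lemma prod_expn (T : Type) (s : seq T) (F : T -> nat) k :
  (\prod_(x <- s) F x) ^ k = \prod_(x <- s) F x ^ k.
Proof.
elim: s => [|x s IH]; first by rewrite !big_nil exp1n.
by rewrite !big_cons expnMn IH.
Qed.

Lemma prod_if_const (T : Type) (s : seq T) (P : pred T) B :
  \prod_(x <- s) (if P x then B else 1) = B ^ count P s.
Proof.
elim: s => [|x s IH]; first by rewrite big_nil.
by rewrite big_cons IH /=; case: (P x); rewrite ?expnS ?mul1n ?add0n.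
Qed.

(* The divisor bound: multiply the local bounds over the factorisation of n;
   at most 2^k primes are small, each contributing a factor k^k. *)
Lemma divisors_size_exp_le k n : 0 < k -> 0 < n ->
  size (divisors n) ^ k <= (k ^ k) ^ (2 ^ k) * n.
Proof.
move=> k_gt0 n_gt0; rewrite size_divisors prod_expn.
set s := prime_decomp n.
set c := fun f : nat * nat => if f.1 < 2 ^ k then k ^ k else 1.
apply: (@leq_trans (\prod_(f <- s) (c f * f.1 ^ f.2))).
  rewrite big_seq [X in _ <= X]big_seq; apply: leq_prod => [[p e]] /=.
  by move=> /mem_prime_decomp [p_pr _ _]; apply: succ_exp_le_prime_power; rewrite ?prime_gt1.
rewrite big_split /= leq_mul //; last by rewrite /s -prod_prime_decomp.
rewrite /c prod_if_const leq_pexp2l ?expn_gt0 ?k_gt0 //.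
rewrite -size_filter -(size_map fst).
have -> : [seq f.1 | f <- filter (fun f : nat * nat => f.1 < 2 ^ k) s] =
  filter (fun p => p < 2 ^ k) (map fst s) by rewrite filter_map.
rewrite -[X in _ <= X](size_iota 0 (2 ^ k)); apply: uniq_leq_size.
  exact/filter_uniq/primes_uniq.
by move=> x; rewrite mem_filter mem_iota add0n => /andP[-> _].
Qed.

Lemma divisors_count_le k n : (0 < k)%coq_nat -> (0 < n)%coq_nat ->
  (Nat.pow (length (divisors n)) k <= Nat.pow (Nat.pow k k) (Nat.pow 2 k) * n)%coq_nat.
Proof. by move=> /ltP k_gt0 /ltP n_gt0; rewrite !natpowE; apply/leP/divisors_size_exp_le. Qed.

Lemma divide_dvdn d n : Nat.divide d n <-> d %| n.
Proof. by split; [case=> z ->; exact: dvdn_mull | move/dvdnP => [z ->]; exists z]. Qed.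

Lemma In_divisors d n : (0 < n)%coq_nat -> Nat.divide d n -> In d (divisors n).
Proof. by move=> /ltP n_gt0 /divide_dvdn d_n; apply/In_mem; rewrite -dvdn_divisors. Qed.

Lemma divisor_split_3part q N P : (0 < q)%coq_nat ->
  Nat.divide q (Nat.pow 3 N * (Nat.pow 3 P - 1)%coq_nat)%coq_nat ->
  exists m d, q = (Nat.pow 3 m * d)%coq_nat /\ Nat.divide d (Nat.pow 3 P - 1)%coq_nat.
Proof.
rewrite !natpowE multE !minusE => /ltP q_gt0 /divide_dvdn q_dvd.
have [d d_co3 def_q] := pfactor_coprime (isT : prime 3) q_gt0.
exists (logn 3 q), d; rewrite natpowE; split; first by rewrite mulnC -def_q.
have co_d_3N : coprime d (3 ^ N) by rewrite coprimeXr // coprime_sym.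
apply/divide_dvdn; rewrite -(Gauss_dvdr _ co_d_3N).
by apply: dvdn_trans q_dvd; rewrite def_q dvdn_mulr.
Qed.

End DivisorBound.

(* Remainder of p 3^i modulo q: the state of the long division of p/q in base 3
   after i digits.  The next digit and remainder are read off 3 times it. *)
Definition tremainder (p q i : nat) : nat := ((p * 3 ^ i) mod q)%nat.

Lemma tdigit_succ p q i : (0 < q)%nat ->
  tdigit p q (S i) = (3 * tremainder p q i / q)%nat.
Proof.
intros hq. unfold tdigit, tremainder.
assert (hq0 : q <> 0%nat) by lia.
set (x := (p * 3 ^ i)%nat).
assert (E : (p * 3 ^ S i = 3 * (x / q) * q + 3 * (x mod q))%nat).
{ unfold x. rewrite Nat.pow_succ_r'. pose proof (Nat.div_mod (p * 3 ^ i) q hq0). nia. }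
rewrite E, Nat.div_add_l by exact hq0.
assert (Hlt : (3 * (x mod q) / q < 3)%nat).
{ apply Nat.Div0.div_lt_upper_bound. pose proof (Nat.mod_upper_bound x q hq0). lia. }
rewrite Nat.add_comm, (Nat.mul_comm 3 (x / q)), Nat.Div0.mod_add.
apply Nat.mod_small; exact Hlt.
Qed.

Lemma tremainder_succ p q i :
  tremainder p q (S i) = (3 * tremainder p q i mod q)%nat.
Proof.
unfold tremainder. rewrite Nat.Div0.mul_mod_idemp_r. f_equal. rewrite Nat.pow_succ_r'. lia.
Qed.

Lemma tremainder_step p q i : (0 < q)%nat ->
  (3 * tremainder p q i = q * tdigit p q (S i) + tremainder p q (S i))%nat.
Proof.
intros hq. rewrite tdigit_succ, tremainder_succ by exact hq.
apply Nat.div_mod; lia.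
Qed.

(* If the digits repeat with period P from index N on, so do the remainders:
   the gap r(N+P+j) - r(N+j) = 3^j (r(N+P) - r(N)) stays below q only if it is 0. *)
Lemma tremainder_periodic p q N P : (0 < q)%nat ->
  (forall i, (N <= i)%nat -> tdigit p q (i + P) = tdigit p q i) ->
  tremainder p q (N + P) = tremainder p q N.
Proof.
intros hq HN.
set (r := tremainder p q).
assert (Hd : forall i, (N <= i)%nat -> tdigit p q (S (i + P)) = tdigit p q (S i)).
{ intros i hi. replace (S (i + P)) with (S i + P)%nat by lia. apply HN. lia. }
assert (Hgap : forall j, (Z.of_nat (r (N + j + P)%nat) - Z.of_nat (r (N + j)%nat)
   = Z.of_nat (3 ^ j) * (Z.of_nat (r (N + P)%nat) - Z.of_nat (r N)))%Z).
{ induction j as [|j IH].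
  - rewrite !Nat.add_0_r. change (3 ^ 0)%nat with 1%nat. lia.
  - pose proof (tremainder_step p q (N + j + P) hq) as h1.
    pose proof (tremainder_step p q (N + j) hq) as h2.
    pose proof (Hd (N + j)%nat ltac:(lia)) as h3.
    replace (N + S j + P)%nat with (S (N + j + P)) by lia.
    replace (N + S j)%nat with (S (N + j)) by lia.
    rewrite Nat.pow_succ_r', Nat2Z.inj_mul.
    fold r in h1, h2. rewrite h3 in h1. lia. }
assert (Hlt : forall i, (r i < q)%nat) by (intro i; apply Nat.mod_upper_bound; lia).
destruct (Nat.eq_dec (r (N + P)%nat) (r N)) as [e|ne]; [exact e|exfalso].
pose proof (Hgap q) as h. pose proof (Nat.pow_gt_lin_r 3 q ltac:(lia)) as h3.
pose proof (Hlt (N + q + P)%nat). pose proof (Hlt (N + q)%nat).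
pose proof (Hlt (N + P)%nat). pose proof (Hlt N).
apply Nat2Z.inj_lt in h3.
assert (Z.of_nat (r (N + P)%nat) <> Z.of_nat (r N)) by lia.
nia.
Qed.

Lemma period_divides p q P : (0 < q)%nat -> is_eventual_period p q P ->
  exists N, Nat.divide q (p * (3 ^ N * (3 ^ P - 1)))%nat.
Proof.
intros hq [_ [N HN]].
pose proof (tremainder_periodic p q N P hq HN) as Heq. unfold tremainder in Heq.
exists N.
pose proof (Nat.div_mod (p * 3 ^ (N + P)) q ltac:(lia)) as e1.
pose proof (Nat.div_mod (p * 3 ^ N) q ltac:(lia)) as e2.
rewrite Nat.pow_add_r in e1, Heq. rewrite Heq in e1.
assert (hU : (1 <= 3 ^ P)%nat) by (pose proof (Nat.pow_gt_lin_r 3 P ltac:(lia)); lia).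
set (A := ((p * (3 ^ N * 3 ^ P)) / q)%nat) in *.
set (B := ((p * 3 ^ N) / q)%nat) in *.
set (rem := ((p * 3 ^ N) mod q)%nat) in *.
set (T := (3 ^ N)%nat) in *. set (U := (3 ^ P)%nat) in *.
assert (e3 : (p * (T * (U - 1)) = p * (T * U) - p * T)%nat).
{ replace U with (S (U - 1)) at 2 by lia. nia. }
exists (A - B)%nat. rewrite e3, e1, e2, Nat.mul_sub_distr_r. nia.
Qed.

Definition cantor_digits (x : R) (a : nat -> nat) : Prop :=
  (forall k, a k = 0%nat \/ a k = 2%nat) /\
  infinite_sum (fun k => INR (a k) / 3 ^ (S k)) x.

Definition digits_of (x : R) : nat -> nat :=
  epsilon (inhabits (fun _ : nat => 0%nat)) (cantor_digits x).

Lemma digits_of_spec x : cantor x -> cantor_digits x (digits_of x).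
Proof. intros [_ H]. unfold digits_of. apply epsilon_spec. exact H. Qed.

Fixpoint tpartial (a : nat -> nat) (m : nat) : R :=
  match m with 0%nat => 0 | S m' => tpartial a m' + INR (a m') / 3 ^ (S m') end.

Lemma sum_f_R0_tpartial a m :
  sum_f_R0 (fun k => INR (a k) / 3 ^ (S k)) m = tpartial a (S m).
Proof. induction m as [|m IH]; simpl; [lra|]. simpl in IH. rewrite IH. reflexivity. Qed.

Lemma tpartial_mono a m j : tpartial a m <= tpartial a (m + j).
Proof.
induction j as [|j IH]; [rewrite Nat.add_0_r; lra|].
rewrite Nat.add_succ_r. simpl.
assert (0 <= INR (a (m + j)%nat) / (3 * 3 ^ (m + j))).
{ apply Rmult_le_pos; [apply pos_INR|].
  apply Rlt_le, Rinv_0_lt_compat, Rmult_lt_0_compat; [lra|apply pow_lt; lra]. }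
lra.
Qed.

Lemma tpartial_tail a m j : (forall k, a k = 0%nat \/ a k = 2%nat) ->
  tpartial a (m + j) + / 3 ^ (m + j) <= tpartial a m + / 3 ^ m.
Proof.
intros Ha. induction j as [|j IH]; [rewrite Nat.add_0_r; lra|].
rewrite Nat.add_succ_r. simpl.
set (z := 3 ^ (m + j)) in *.
assert (hz : 0 < / z) by (apply Rinv_0_lt_compat, pow_lt; lra).
assert (ha : 0 <= INR (a (m + j)%nat) <= 2).
{ destruct (Ha (m + j)%nat) as [e|e]; rewrite e; simpl; lra. }
assert (INR (a (m + j)%nat) / (3 * z) + / (3 * z) <= / z).
{ unfold Rdiv. rewrite !Rinv_mult. nra. }
lra.
Qed.

Lemma cantor_digits_bounds x a m : cantor_digits x a ->
  tpartial a m <= x <= tpartial a m + / 3 ^ m.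
Proof.
intros [Ha Hs]. split.
- destruct (Rle_lt_dec (tpartial a m) x) as [h|h]; [exact h|exfalso].
  destruct (Hs (tpartial a m - x) ltac:(lra)) as [N HN].
  specialize (HN (max N m) (Nat.le_max_l _ _)).
  unfold R_dist in HN. rewrite sum_f_R0_tpartial in HN.
  pose proof (tpartial_mono a m (S (max N m) - m)) as hm.
  replace (m + (S (max N m) - m))%nat with (S (max N m)) in hm by lia.
  apply Rabs_def2 in HN. lra.
- destruct (Rle_lt_dec x (tpartial a m + / 3 ^ m)) as [h|h]; [exact h|exfalso].
  destruct (Hs (x - (tpartial a m + / 3 ^ m)) ltac:(lra)) as [N HN].
  specialize (HN (max N m) (Nat.le_max_l _ _)).
  unfold R_dist in HN. rewrite sum_f_R0_tpartial in HN.
  pose proof (tpartial_tail a m (S (max N m) - m) Ha) as hm.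
  replace (m + (S (max N m) - m))%nat with (S (max N m)) in hm by lia.
  assert (0 < / 3 ^ (S (max N m))) by (apply Rinv_0_lt_compat, pow_lt; lra).
  apply Rabs_def2 in HN. lra.
Qed.

Lemma tpartial_ext a b m : (forall i, (i < m)%nat -> a i = b i) -> tpartial a m = tpartial b m.
Proof.
induction m as [|m IH]; intros H; simpl; [reflexivity|].
rewrite IH by (intros; apply H; lia). rewrite H by lia. reflexivity.
Qed.

Definition digit_word (a : nat -> nat) (n : nat) : list bool :=
  map (fun i => Nat.eqb (a i) 2) (seq 0 n).

Lemma digit_word_length a n : length (digit_word a n) = n.
Proof. unfold digit_word. rewrite length_map, length_seq. reflexivity. Qed.

Lemma digit_word_inj a b n :
  (forall k, a k = 0%nat \/ a k = 2%nat) -> (forall k, b k = 0%nat \/ b k = 2%nat) ->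
  digit_word a n = digit_word b n -> forall i, (i < n)%nat -> a i = b i.
Proof.
intros Ha Hb E i hi.
assert (E2 := f_equal (fun l => nth_error l i) E). simpl in E2.
unfold digit_word in E2. rewrite !nth_error_map, nth_error_seq in E2.
destruct (Nat.ltb_spec i n); [|lia]. simpl in E2. injection E2 as E2.
destruct (Ha i) as [h1|h1]; destruct (Hb i) as [h2|h2]; rewrite h1, h2 in *;
  simpl in E2; congruence.
Qed.

Fixpoint bool_words (n : nat) : list (list bool) :=
  match n with
  | 0%nat => nil :: nil
  | S n' => map (cons true) (bool_words n') ++ map (cons false) (bool_words n')
  end.

Lemma bool_words_length n : length (bool_words n) = (2 ^ n)%nat.
Proof. induction n as [|n IH]; simpl; [reflexivity|]. rewrite length_app, !length_map, IH. lia. Qed.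

Lemma In_bool_words n w : length w = n -> In w (bool_words n).
Proof.
revert w; induction n as [|n IH]; intros w hw.
- destruct w; [left; reflexivity|simpl in hw; lia].
- destruct w as [|b w]; [simpl in hw; lia|]. simpl in hw. simpl.
  apply in_or_app. destruct b; [left|right]; apply in_map, IH; lia.
Qed.

Lemma INR_pow3 n : INR (3 ^ n) = 3 ^ n.
Proof. rewrite pow_INR. f_equal. simpl. ring. Qed.

Lemma INR_close a b : Rabs (INR a - INR b) < 1 -> a = b.
Proof.
intros H. apply Rabs_def2 in H.
destruct (Nat.lt_total a b) as [h|[h|h]]; [exfalso| exact h| exfalso].
- assert (INR (S a) <= INR b) by (apply le_INR; lia). rewrite S_INR in *. lra.
- assert (INR (S b) <= INR a) by (apply le_INR; lia). rewrite S_INR in *. lra.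
Qed.

(* Two points of C with the same first n digits lie within 3^-n of each other;
   for fractions with a common denominator q < 3^n this forces equal numerators. *)
Lemma cantor_numerators_le n q (l : list (nat * nat)) :
  (1 <= q)%nat -> (q < 3 ^ n)%nat -> NoDup l ->
  (forall x, In x l -> cantor (INR (fst x) / INR q) /\ snd x = q) ->
  (length l <= 2 ^ n)%nat.
Proof.
intros hq1 hqn hnd hl.
set (word := fun x : nat * nat => digit_word (digits_of (INR (fst x) / INR q)) n).
assert (hqR : 0 < INR q) by (apply lt_0_INR; lia).
assert (hqn' : INR q < 3 ^ n) by (rewrite <- INR_pow3; apply lt_INR; exact hqn).
assert (h3 : 0 < 3 ^ n) by (apply pow_lt; lra).
assert (Hinj : NoDup (map word l)).
{ apply NoDup_map_NoDup_ForallPairs; [|exact hnd].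
  intros [x1 x2] [y1 y2] hx hy e. unfold word in e. simpl in e.
  destruct (hl _ hx) as [cx ex]. destruct (hl _ hy) as [cy ey]. simpl in *. subst.
  pose proof (digits_of_spec _ cx) as dx. pose proof (digits_of_spec _ cy) as dy.
  pose proof (digit_word_inj _ _ _ (proj1 dx) (proj1 dy) e) as same.
  pose proof (cantor_digits_bounds _ _ n dx) as b1.
  pose proof (cantor_digits_bounds _ _ n dy) as b2.
  rewrite (tpartial_ext _ _ _ same) in b1.
  set (X := INR x1 / INR q) in *. set (Y := INR y1 / INR q) in *.
  assert (hb : Rabs (X - Y) <= / 3 ^ n) by (apply Rabs_le; lra).
  assert (hd : Rabs (INR x1 - INR y1) < 1).
  { replace (INR x1 - INR y1) with ((X - Y) * INR q) by (unfold X, Y; field; lra).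
    rewrite Rabs_mult, (Rabs_right (INR q)) by lra.
    apply Rle_lt_trans with (/ 3 ^ n * INR q); [apply Rmult_le_compat_r; lra|].
    apply Rmult_lt_reg_l with (3 ^ n); [exact h3|].
    rewrite <- Rmult_assoc, Rinv_r by lra. lra. }
  rewrite (INR_close _ _ hd). reflexivity. }
rewrite <- (length_map word l), <- bool_words_length.
apply NoDup_incl_length; [exact Hinj|].
intros w hw. apply in_map_iff in hw. destruct hw as [x [<- _]].
apply In_bool_words, digit_word_length.
Qed.

Lemma card_le_cover (A B C : nat * nat -> Prop) a b :
  card_le A a -> card_le B b -> (forall x, C x -> A x \/ B x) -> card_le C (a + b).
Proof.
intros HA HB HC l hnd hl.
set (inA := fun x => if excluded_middle_informative (A x) then true else false).
rewrite <- (filter_length inA l), plus_INR.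
apply Rplus_le_compat.
- apply HA; [apply NoDup_filter; exact hnd|].
  intros x hx. apply filter_In in hx. destruct hx as [_ e]. unfold inA in e.
  destruct (excluded_middle_informative (A x)); [assumption|discriminate].
- apply HB; [apply NoDup_filter; exact hnd|].
  intros x hx. apply filter_In in hx. destruct hx as [hx e]. unfold inA in e.
  destruct (excluded_middle_informative (A x)); [discriminate|].
  destruct (HC x (hl x hx)); [contradiction|assumption].
Qed.

Lemma count_bigO_cover (A B C : nat -> nat * nat -> Prop) eps :
  count_bigO A eps -> count_bigO B eps ->
  (forall n x, C n x -> A n x \/ B n x) -> count_bigO C eps.
Proof.
intros [c1 [N1 H1]] [c2 [N2 H2]] HC.
exists (c1 + c2), (max N1 N2). intros n hn.
rewrite Rmult_plus_distr_r.
apply card_le_cover with (A n) (B n); [apply H1; lia|apply H2; lia|apply HC].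
Qed.

Lemma card_le_mono A a b : card_le A a -> a <= b -> card_le A b.
Proof. intros H hab l h1 h2. specialize (H l h1 h2). lra. Qed.

Lemma length_le_fibres (A : nat * nat -> Prop) (Bd : nat) (D : list nat) :
  (forall d l, NoDup l -> (forall x, In x l -> A x /\ snd x = d) -> (length l <= Bd)%nat) ->
  forall l, NoDup l -> (forall x, In x l -> A x /\ In (snd x) D) ->
  (length l <= length D * Bd)%nat.
Proof.
intros Hfib. induction D as [|d D IH]; intros l hnd hl.
- destruct l as [|x l]; [simpl; lia|]. destruct (hl x (or_introl eq_refl)) as [_ []].
- rewrite <- (filter_length (fun x => Nat.eqb (snd x) d) l). simpl length.
  assert (h1 : (length (filter (fun x => Nat.eqb (snd x) d) l) <= Bd)%nat).
  { apply (Hfib d); [apply NoDup_filter; exact hnd|].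
    intros x hx. apply filter_In in hx. destruct hx as [hx e].
    apply Nat.eqb_eq in e. split; [apply hl; exact hx|exact e]. }
  assert (h2 : (length (filter (fun x => negb (Nat.eqb (snd x) d)) l) <= length D * Bd)%nat).
  { apply IH; [apply NoDup_filter; exact hnd|].
    intros x hx. apply filter_In in hx. destruct hx as [hx e].
    destruct (hl x hx) as [ha [e'|e']]; split; try assumption.
    subst. rewrite Nat.eqb_refl in e. discriminate. }
  lia.
Qed.

Lemma length_flat_map_le {X Y : Type} (f : X -> list Y) (l : list X) b :
  (forall x, In x l -> INR (length (f x)) <= b) ->
  INR (length (flat_map f l)) <= INR (length l) * b.
Proof.
induction l as [|x l IH]; intros H; cbn [length flat_map]; [simpl; lra|].
rewrite length_app, plus_INR, S_INR.
assert (INR (length (f x)) <= b) by (apply H; left; reflexivity).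
assert (INR (length (flat_map f l)) <= INR (length l) * b) by (apply IH; intros; apply H; right; assumption).
lra.
Qed.

(* Candidate denominators of S_n^(K): q = 3^m d with m < n and d | 3^P - 1,
   1 <= P <= Kn n. *)
Definition cand_denoms (Kn n : nat) : list nat :=
  flat_map (fun m => flat_map (fun P => map (fun d => (3 ^ m * d)%nat)
     (prime.divisors (3 ^ P - 1))) (seq 1 (Kn * n))) (seq 0 n).

Lemma length_cand_denoms Kn n b :
  (forall P, (1 <= P <= Kn * n)%nat -> INR (length (prime.divisors (3 ^ P - 1))) <= b) ->
  INR (length (cand_denoms Kn n)) <= INR n * (INR (Kn * n) * b).
Proof.
intros Hb. unfold cand_denoms.
eapply Rle_trans; [apply length_flat_map_le with (b := INR (Kn * n) * b)|].
2:{ rewrite length_seq. lra. }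
intros m _. eapply Rle_trans; [apply length_flat_map_le with (b := b)|].
2:{ rewrite length_seq. lra. }
intros P hP. rewrite length_map. apply Hb. apply in_seq in hP. lia.
Qed.

Lemma pow_ge1 a b : (1 <= a)%nat -> (1 <= a ^ b)%nat.
Proof. intros h. pose proof (Nat.pow_le_mono_l 1 a b h). rewrite Nat.pow_1_l in *. lia. Qed.

Lemma ln_nonneg x : 1 <= x -> 0 <= ln x.
Proof.
intros h. destruct (Req_dec x 1) as [e|e]; [subst; rewrite ln_1; lra|].
pose proof (ln_increasing 1 x ltac:(lra) ltac:(lra)). rewrite ln_1 in *. lra.
Qed.

Lemma period_le_linear K Kn n q P : (1 <= q)%nat -> (q < 3 ^ n)%nat ->
  Rabs K * ln 3 <= INR Kn -> INR P <= K * ln (INR q) -> (P <= Kn * n)%nat.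
Proof.
intros hq1 hqn hKn hP. apply INR_le. rewrite mult_INR.
assert (hl0 : 0 <= ln (INR q)) by (apply ln_nonneg, (le_INR 1); exact hq1).
assert (hl1 : ln (INR q) <= INR n * ln 3).
{ rewrite <- ln_pow by lra. left. apply ln_increasing; [apply lt_0_INR; lia|].
  rewrite <- INR_pow3. apply lt_INR. exact hqn. }
pose proof (Rle_abs K). pose proof (Rabs_pos K). pose proof (pos_INR n).
assert (K * ln (INR q) <= Rabs K * ln (INR q)) by nra.
assert (Rabs K * ln (INR q) <= Rabs K * (INR n * ln 3)) by (apply Rmult_le_compat_l; lra).
nra.
Qed.

(* Every denominator in S_n^(K) is a candidate: from q | p 3^N (3^P - 1) and
   gcd(p, q) = 1 we get q = 3^m d with d | 3^P - 1, and m < n since q < 3^n. *)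
Lemma In_cand_denoms K Kn n p q : Rabs K * ln 3 <= INR Kn ->
  S_nK K n (p, q) -> In q (cand_denoms Kn n).
Proof.
intros hKn [[_ [hg [hlo hhi]]] [P [[hper _] hPK]]].
assert (hq1 : (1 <= q)%nat) by (pose proof (pow_ge1 3 (n - 1) ltac:(lia)); lia).
destruct (period_divides p q P ltac:(lia) hper) as [N hN].
assert (hN' : Nat.divide q (3 ^ N * (3 ^ P - 1))).
{ apply (Nat.gauss q p); [exact hN|]. rewrite Nat.gcd_comm. exact hg. }
destruct (DivisorBound.divisor_split_3part q N P ltac:(lia) hN') as [m [d [def_q hd]]].
assert (hP1 : (1 <= P)%nat) by apply hper.
assert (hmn : (m < n)%nat).
{ destruct (Nat.lt_ge_cases m n) as [h|h]; [exact h|exfalso].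
  pose proof (Nat.pow_le_mono_r 3 n m ltac:(lia) h).
  assert (3 ^ m <= q)%nat.
  { destruct d as [|d]; [rewrite Nat.mul_0_r in def_q; lia|].
    rewrite def_q, Nat.mul_succ_r. lia. }
  lia. }
pose proof (period_le_linear K Kn n q P hq1 hhi hKn hPK) as hPn.
unfold cand_denoms. apply in_flat_map. exists m. split; [apply in_seq; lia|].
apply in_flat_map. exists P. split; [apply in_seq; lia|].
rewrite def_q. apply in_map, DivisorBound.In_divisors; [|exact hd].
pose proof (Nat.pow_le_mono_r 3 1 P ltac:(lia) hP1). simpl in *. lia.
Qed.

Lemma card_SnK K Kn n : Rabs K * ln 3 <= INR Kn ->
  card_le (S_nK K n) (INR (length (cand_denoms Kn n)) * 2 ^ n).
Proof.
intros hKn l hnd hl.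
set (A := fun x : nat * nat => cantor (INR (fst x) / INR (snd x)) /\
   (1 <= snd x)%nat /\ (snd x < 3 ^ n)%nat).
assert (h : (length l <= length (cand_denoms Kn n) * 2 ^ n)%nat).
{ apply (length_le_fibres A); [|exact hnd|].
  - intros d l' hnd' hl'. destruct l' as [|x l'']; [simpl; lia|].
    destruct (hl' x (or_introl eq_refl)) as [[_ [h1 h2]] e].
    apply (cantor_numerators_le n d); [lia|lia|exact hnd'|].
    intros y hy. destruct (hl' y hy) as [[hc _] e']. rewrite e' in hc. split; assumption.
  - intros [p q] hx. pose proof (hl _ hx) as hs. split.
    + destruct hs as [[hc [_ [hlo hhi]]] _]. pose proof (pow_ge1 3 (n - 1) ltac:(lia)).
      split; [exact hc|simpl; lia].
    + apply (In_cand_denoms K Kn n p q hKn hs). }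
apply le_INR in h. rewrite mult_INR, pow_INR in h. exact h.
Qed.

Lemma pow_le_reg x y k : 0 <= x -> 0 <= y -> (1 <= k)%nat -> x ^ k <= y ^ k -> x <= y.
Proof.
intros hx hy hk hxy. destruct (Rle_lt_dec x y) as [h|h]; [exact h|exfalso].
assert (hstrict : forall j, y ^ S j < x ^ S j).
{ induction j as [|j IH]; [simpl; lra|].
  change (y * y ^ S j < x * x ^ S j).
  assert (0 <= y ^ S j) by (apply pow_le; lra). nra. }
destruct k as [|j]; [lia|]. specialize (hstrict j). lra.
Qed.

Lemma divisors_count_le_root k N y : (1 <= k)%nat -> (0 < N)%nat -> 0 <= y ->
  INR N <= y ^ k -> INR (length (prime.divisors N)) <= INR ((k ^ k) ^ (2 ^ k)) * y.
Proof.
intros hk hN hy hNy.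
set (Bk := INR ((k ^ k) ^ (2 ^ k))).
assert (hBk : 1 <= Bk) by (apply (le_INR 1), pow_ge1, pow_ge1; lia).
assert (hdiv : INR (length (prime.divisors N)) ^ k <= Bk * INR N).
{ unfold Bk. rewrite <- pow_INR, <- mult_INR. apply le_INR.
  exact (DivisorBound.divisors_count_le k N ltac:(lia) hN). }
apply (pow_le_reg _ _ k); [apply pos_INR|nra|exact hk|].
rewrite Rpow_mult_distr. eapply Rle_trans; [exact hdiv|].
apply Rmult_le_compat; [lra|apply pos_INR| |exact hNy].
rewrite <- (pow_1 Bk) at 1. apply Rle_pow; [lra|exact hk].
Qed.

Lemma exp_pow_nat x k : exp x ^ k = exp (INR k * x).
Proof.
induction k as [|k IH]; simpl; [rewrite Rmult_0_l, exp_0; reflexivity|].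
rewrite IH, <- exp_plus. f_equal. destruct k; simpl; ring.
Qed.

Lemma pow3_pred_le_exp P M t : (P <= M)%nat -> INR M * ln 3 <= t -> INR (3 ^ P - 1) <= exp t.
Proof.
intros hPM ht.
apply Rle_trans with (INR (3 ^ M)).
- apply le_INR. pose proof (Nat.pow_le_mono_r 3 P M ltac:(lia) hPM). lia.
- rewrite INR_pow3, <- (exp_ln 3), exp_pow_nat by lra.
  destruct (Rle_lt_or_eq_dec _ _ ht) as [h|h]; [left; apply exp_increasing, h|rewrite h; lra].
Qed.

(* Polynomial growth is dominated by exponential growth:
   x^2 <= (4 / delta^2) exp(x delta), from z/2 <= exp(z/2). *)
Lemma sq_le_exp x delta : 0 <= x -> 0 < delta -> x ^ 2 <= 4 / delta ^ 2 * exp (x * delta).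
Proof.
intros hx hdelta. set (z := x * delta).
assert (hz : 0 <= z) by (unfold z; nra).
assert (hhalf : z / 2 <= exp (z / 2)).
{ destruct (Req_dec z 0) as [e|e].
  - rewrite e. replace (0 / 2) with 0 by field. rewrite exp_0; lra.
  - pose proof (exp_ineq1 (z / 2) ltac:(lra)). lra. }
assert (hz2 : z ^ 2 <= 4 * exp z).
{ replace z with (z / 2 + z / 2) at 2 by field. rewrite exp_plus.
  assert (0 <= z / 2) by lra. nra. }
replace (x ^ 2) with (z ^ 2 * / delta ^ 2) by (unfold z; field; lra).
replace (4 / delta ^ 2 * exp z) with (4 * exp z * / delta ^ 2) by (field; lra).
apply Rmult_le_compat_r; [|exact hz2]. apply Rlt_le, Rinv_0_lt_compat, pow_lt; lra.
Qed.

(* If Kn log 3 <= k delta, every 3^P - 1 with P <= Kn n is at most exp(n delta)^k,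
   so it has at most (k^k)^(2^k) exp(n delta) divisors; this bounds the candidates. *)
Lemma length_cand_denoms_le_exp Kn k delta n : (1 <= k)%nat ->
  INR Kn * ln 3 <= INR k * delta ->
  INR (length (cand_denoms Kn n)) <=
  INR n * (INR (Kn * n) * (INR ((k ^ k) ^ (2 ^ k)) * exp (INR n * delta))).
Proof.
intros hk hKk. apply length_cand_denoms. intros P hP.
apply divisors_count_le_root; [exact hk| |apply Rlt_le, exp_pos|].
- pose proof (Nat.pow_le_mono_r 3 1 P ltac:(lia) ltac:(lia)). simpl in *. lia.
- rewrite exp_pow_nat. apply (pow3_pred_le_exp P (Kn * n)); [lia|].
  rewrite mult_INR. pose proof (pos_INR n). nra.
Qed.

(* With
   delta = eps log 2 / 2 and y = exp(n delta) = 2^(n eps / 2), there are at most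
   n * Kn n * B y candidate denominators, n^2 is O(y), and 2^n y^2 = 2^(n(1+eps)). *)
Lemma count_bigO_SnK K eps : 0 < eps -> count_bigO (S_nK K) eps.
Proof.
intros heps.
destruct (INR_unbounded (Rabs K * ln 3)) as [Kn hKn].
assert (hln2 : 0 < ln 2) by (pose proof ln_lt_2; lra).
set (delta := eps * ln 2 / 2).
assert (hdelta : 0 < delta) by (unfold delta; nra).
destruct (INR_unbounded (INR Kn * ln 3 / delta)) as [k hk].
assert (hKk : INR Kn * ln 3 <= INR (S k) * delta).
{ rewrite S_INR. apply Rmult_gt_compat_r with (r := delta) in hk; [|exact hdelta].
  unfold Rdiv in hk. rewrite Rmult_assoc, Rinv_l in hk by lra. nra. }
exists (INR Kn * INR ((S k ^ S k) ^ (2 ^ S k)) * (4 / delta ^ 2)), 0%nat. intros n _.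
pose proof (length_cand_denoms_le_exp Kn (S k) delta n ltac:(lia) hKk) as hlen.
pose proof (sq_le_exp (INR n) delta (pos_INR n) hdelta) as hsq.
assert (hpow : Rpower 2 (INR n * (1 + eps)) = 2 ^ n * exp (INR n * delta) * exp (INR n * delta)).
{ rewrite <- Rpower_pow by lra. unfold Rpower, delta. rewrite <- !exp_plus. f_equal. field. }
set (B := INR ((S k ^ S k) ^ (2 ^ S k))) in *. set (y := exp (INR n * delta)) in *.
apply card_le_mono with (INR (length (cand_denoms Kn n)) * 2 ^ n); [apply card_SnK; lra|].
rewrite hpow, mult_INR in *.
assert (hy : 0 < y) by apply exp_pos.
assert (h2n : 0 < 2 ^ n) by (apply pow_lt; lra).
pose proof (pos_INR Kn). pose proof (pos_INR n). assert (0 <= B) by apply pos_INR.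
apply Rle_trans with (INR n ^ 2 * (INR Kn * B * y * 2 ^ n)).
- replace (INR n ^ 2 * (INR Kn * B * y * 2 ^ n))
    with (INR n * (INR Kn * INR n * (B * y)) * 2 ^ n) by ring.
  apply Rmult_le_compat_r; lra.
- replace (INR Kn * B * (4 / delta ^ 2) * (2 ^ n * y * y))
    with (4 / delta ^ 2 * y * (INR Kn * B * y * 2 ^ n)) by ring.
  apply Rmult_le_compat_r; [repeat apply Rmult_le_pos; lra|exact hsq].
Qed.

Theorem corollary5p3 :
  (exists K : R, forall eps1 : R, 0 < eps1 ->
     count_bigO (fun n r => S_n n r /\ ~ S_nK K n r) eps1) ->
  forall eps1 : R, 0 < eps1 -> count_bigO S_n eps1.
Proof.
intros [K HK] eps heps.
apply count_bigO_cover with (fun n r => S_n n r /\ ~ S_nK K n r) (S_nK K).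
- exact (HK eps heps).
- exact (count_bigO_SnK K eps heps).
- intros n x hx. destruct (classic (S_nK K n x)); [right|left]; auto.
Qed.
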